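(* Let $p$ be a prime and $n\ge 2$ an integer. Then, modulo $p$, \[ \sum_{j=1}^{p-1}\zeta_{n,2}(jx,x)\equiv\begin{cases}-x^n=-\zeta_{n,1}(x) & \text{if } n=p^i \text{ for some } i\ge1,\\ 0&\text{otherwise.}\end{cases} \]
   Context: For integers $n,k\ge1$, $\zeta_{n,k}(x_1,\dots,x_k)=\phi(n,k)^{-1}\sum_{\lambda}\frac{n!}{\lambda_1!\cdots\lambda_k!}x_1^{\lambda_1}\cdots x_k^{\lambda_k}$, the sum over $k$-tuples $\lambda$ of positive integers with sum $n$, and $\phi(n,k)=\gcd_\lambda\frac{n!}{\lambda_1!\cdots\lambda_k!}$ over the same tuples; this is an integral polynomial. In particular $\zeta_{n,2}(x,y)=\phi(n,2)^{-1}\big((x+y)^n-x^n-y^n\big)$ and $\zeta_{n,1}(x)=x^n$. The sum $\sum_{j}\zeta_{n,2}(jx,x)$ is the additive half-Weil form associated to $\zeta_{n,2}$. *)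

From mathcomp Require Import all_boot all_order all_algebra.
Set Implicit Arguments. Unset Strict Implicit. Unset Printing Implicit Defensive.
Import Order.TTheory GRing.Theory Num.Theory.
Local Open Scope ring_scope.

(* phi(n,2) = gcd over pairs (l1,l2) of positive integers with l1+l2 = n of
   n!/(l1! l2!); with l1 = k, l2 = n - k, 1 <= k < n. *)
Definition phi2 (n : nat) : nat :=
  \big[gcdn/0%N]_(1 <= k < n) (n`! %/ (k`! * (n - k)`!))%N.

(* zeta_{n,2}(a,b) = phi(n,2)^{-1} sum_{l1+l2=n, l_i>=1} n!/(l1! l2!) a^l1 b^l2,
   evaluated in an arbitrary commutative ring (the integer coefficients
   n!/(l1!l2!)/phi(n,2) are mapped into the ring). *)
Definition zeta2 (R : comPzRingType) (n : nat) (a b : R) : R :=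
  \sum_(1 <= k < n)
     ((n`! %/ (k`! * (n - k)`!)) %/ phi2 n)%N%:R * a ^+ k * b ^+ (n - k).

Definition zeta1 (R : comPzRingType) (n : nat) (a : R) : R := a ^+ n.

Definition polycongr (p : nat) (P Q : {poly int}) : Prop :=
  forall i : nat, (p%:Z %| (P - Q)`_i)%Z.

From mathcomp Require Import all_boot all_order all_algebra zify.
Import Order.TTheory GRing.Theory Num.Theory.
Local Open Scope ring_scope.

(* Write phi for phi(n,2).  Each zeta_{n,2}(jx, x) is a multiple c_j x^n, and
   phi * sum_j c_j = sum_(1 <= j < p) ((j+1)^n - j^n - 1) = p^n - p telescopes.
   Expanding (X+1)^n in F_p[X] shows that p divides every middle binomial
   coefficient of n, i.e. p divides phi, exactly when n is a power of p.  In that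
   case phi divides 'C(n,1) = n, so phi is a power of p, and it must be p itself
   since p^2 does not divide p^n - p; hence sum_j c_j = p^(n-1) - 1 = -1 mod p.
   Otherwise p is prime to phi and divides phi * sum_j c_j, hence sum_j c_j. *)

Lemma coef_exprXD1n (R : nzRingType) n k :
  (('X + 1) ^+ n : {poly R})`_k = 'C(n, k)%:R.
Proof.
have -> : ('X + 1) ^+ n = \poly_(i < n.+1) 'C(n, i)%:R :> {poly R}.
  by rewrite exprD1n poly_def; apply: eq_bigr => i _; rewrite scaler_nat.
by rewrite coef_poly; case: ltnP => // /bin_small ->.
Qed.

Lemma phi2E n : phi2 n = \big[gcdn/0%N]_(1 <= k < n) 'C(n, k).
Proof. by apply: eq_big_nat => k k_lt; rewrite bin_factd //; lia. Qed.

Lemma phi2_dvd_bin n k : (0 < k < n)%N -> (phi2 n %| 'C(n, k))%N.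
Proof.
move=> k_lt; rewrite phi2E (bigD1_seq k) ?mem_index_iota ?iota_uniq //=.
exact: dvdn_gcdl.
Qed.

Lemma dvdn_phi2 d n :
  (forall k, (0 < k < n)%N -> (d %| 'C(n, k))%N) -> (d %| phi2 n)%N.
Proof.
move=> dvd_bin; rewrite phi2E big_seq.
elim/big_ind: _ => // [a b da db | k]; first by rewrite dvdn_gcd da db.
by rewrite mem_index_iota => /dvd_bin.
Qed.

Lemma zeta2_mulr_diag (R : comPzRingType) n (a : nat) (x : R) :
  zeta2 n (a%:R * x) x = x ^+ n *+ \sum_(1 <= k < n) ('C(n, k) %/ phi2 n) * a ^ k.
Proof.
rewrite /zeta2 -sumrMnr; apply: eq_big_nat => k k_lt.
rewrite bin_factd; last lia.
rewrite exprMn -natrX mulrA -natrM -mulrA -exprD subnKC ?mulr_natl //; lia.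
Qed.

Definition half_weil_coef q n : nat :=
  \sum_(1 <= j < q) \sum_(1 <= k < n) ('C(n, k) %/ phi2 n) * j ^ k.

Lemma sum_zeta2_mulr_diag (R : comPzRingType) q n (x : R) :
  \sum_(1 <= j < q) zeta2 n (j%:R * x) x = x ^+ n *+ half_weil_coef q n.
Proof. by rewrite -sumrMnr; apply: eq_bigr => j _; apply: zeta2_mulr_diag. Qed.

Lemma expSn_bin_inner n j : (0 < n)%N ->
  (j ^ n + (\sum_(1 <= k < n) 'C(n, k) * j ^ k).+1 = j.+1 ^ n)%N.
Proof.
case: n => // n _; rewrite -[j.+1]add1n expnDn big_ord_recr big_ord_recl /=.
rewrite big_add1 /= big_mkord binn bin0 subnn !exp1n.
under [in RHS]eq_bigr => i _ do rewrite exp1n mul1n /bump /= add1n.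
by rewrite expn0 !mul1n [RHS]addnC add1n.
Qed.

Lemma phi2_mul_half_weil_coef q n : (0 < q)%N -> (0 < n)%N ->
  (phi2 n * half_weil_coef q n + q = q ^ n)%N.
Proof.
move=> q_gt0 n_gt0.
have -> : (phi2 n * half_weil_coef q n =
           \sum_(1 <= j < q) \sum_(1 <= k < n) 'C(n, k) * j ^ k)%N.
  rewrite big_distrr; apply: eq_bigr => j _; rewrite big_distrr.
  apply: eq_big_nat => k k_lt /=.
  by rewrite mulnA [(phi2 n * _)%N]mulnC divnK // phi2_dvd_bin.
have exp_homo : {homo (fun j => j ^ n)%N : x y / (x <= y)%N}.
  by move=> x y; rewrite leq_exp2r.
have := telescope_sumn 1 q exp_homo.
have -> : (\sum_(1 <= j < q) (j.+1 ^ n - j ^ n) =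
           \sum_(1 <= j < q) (\sum_(1 <= k < n) 'C(n, k) * j ^ k + 1))%N.
  by apply: eq_bigr => j _; rewrite -expSn_bin_inner // addKn addn1.
rewrite big_split sum_nat_const_nat exp1n /=.
have := expn_gt0 q n; rewrite q_gt0; lia.
Qed.

Section BinomialsModPrime.
Variable p : nat.
Hypothesis p_pr : prime p.

Lemma dvdn_bin_coef n k :
  (p %| 'C(n, k))%N = ((('X + 1) ^+ n : {poly 'F_p})`_k == 0).
Proof. by rewrite coef_exprXD1n (dvdn_pcharf (pchar_Fp p_pr)). Qed.

Lemma exprXD1n_pnat n : p.-nat n ->
  (('X + 1) ^+ n : {poly 'F_p}) = 'X^n + 1.
Proof.
move=> pn; rewrite exprDn_pchar ?expr1n //.
have pchar_p : p \in [pchar {poly 'F_p}] by rewrite pchar_lalg pchar_Fp.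
by rewrite (eq_pnat _ (pcharf_eq pchar_p)).
Qed.

Lemma prime_dvd_bin_pexp i k : (0 < k < p ^ i)%N -> (p %| 'C(p ^ i, k))%N.
Proof.
move=> /andP[k_gt0 k_lt]; rewrite dvdn_bin_coef exprXD1n_pnat ?pnatX ?pnat_id //.
by rewrite coefD coefXn coefC (ltn_eqF k_lt) (gtn_eqF k_gt0) addr0.
Qed.

Lemma dvdn_bin_mulp m k : (p %| 'C(m * p, k * p))%N = (p %| 'C(m, k))%N.
Proof.
have p_gt0 := prime_gt0 p_pr.
rewrite !dvdn_bin_coef mulnC exprM exprXD1n_pnat ?pnat_id //.
have -> : ('X^p + 1) ^+ m = ('X + 1) ^+ m \Po 'X^p :> {poly 'F_p}.
  by rewrite rmorphXn rmorphD rmorph1 /= comp_polyX.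
by rewrite coef_comp_poly_Xn // dvdn_mull // mulnK.
Qed.

Lemma pexp_of_dvd_bin n : (1 < n)%N ->
  (forall k, (0 < k < n)%N -> (p %| 'C(n, k))%N) ->
  exists i, (1 <= i)%N /\ n = (p ^ i)%N.
Proof.
elim/ltn_ind: n => n IH n_gt1 dvd_bin.
have /dvdnP[m n_eq] : (p %| n)%N by rewrite -(bin1 n) dvd_bin // n_gt1.
have p_gt1 := prime_gt1 p_pr.
have [m_le1 | m_gt1] := leqP m 1.
  have m_eq1 : m = 1%N by move: n_gt1; rewrite n_eq; nia.
  by exists 1%N; rewrite n_eq m_eq1 mul1n expn1.
have [||i [i_gt0 m_eq]] := IH m _ m_gt1.
- by rewrite n_eq -{1}[m]muln1 ltn_mul2l; lia.
- move=> k k_lt; rewrite -dvdn_bin_mulp -n_eq dvd_bin // n_eq muln_gt0 ltn_mul2r; lia.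
by exists i.+1; rewrite n_eq m_eq expnSr.
Qed.

Lemma prime_dvd_phi2 n : (1 < n)%N ->
  (p %| phi2 n)%N <-> exists i, (1 <= i)%N /\ n = (p ^ i)%N.
Proof.
move=> n_gt1; split => [p_dvd | [i [i_gt0 ->]]].
  apply: pexp_of_dvd_bin => // k k_lt.
  exact: dvdn_trans p_dvd (phi2_dvd_bin _ _ k_lt).
by apply: dvdn_phi2 => k; apply: prime_dvd_bin_pexp.
Qed.

Lemma phi2_pexp i : (0 < i)%N -> phi2 (p ^ i) = p.
Proof.
move=> i_gt0; set n := (p ^ i)%N.
have p_gt1 := prime_gt1 p_pr.
have n_gt1 : (1 < n)%N by rewrite /n -[1%N](expn0 p) ltn_exp2l.
have /(dvdn_pfactor _ _ p_pr)[e _ phi2_eq] : (phi2 n %| n)%N.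
  by rewrite -{2}(bin1 n) phi2_dvd_bin.
have : (p %| phi2 n)%N by apply/prime_dvd_phi2 => //; exists i.
rewrite phi2_eq; case: e phi2_eq => [|[|e]] phi2_eq; first by rewrite dvdn1; lia.
  by rewrite expn1.
have p2_dvd : (p ^ 2 %| phi2 n)%N by rewrite phi2_eq dvdn_exp2l.
have := phi2_mul_half_weil_coef p n (ltnW p_gt1) (ltnW n_gt1).
move=> /(congr1 (dvdn (p ^ 2))); rewrite dvdn_exp2l ?(ltnW p_gt1) //.
rewrite dvdn_addr ?dvdn_mulr // => /(dvdn_leq (ltnW p_gt1)).
by rewrite -{2}(expn1 p) leq_exp2l.
Qed.

End BinomialsModPrime.

Lemma dvdz_coef_mulrn (P : {poly int}) (d a : nat) i :
  (d %| a)%N -> (d%:Z %| (P *+ a)`_i)%Z.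
Proof. by move=> /dvdnP[b ->]; rewrite coefMn mulrnA -mulr_natr natz dvdz_mull. Qed.

Theorem mainTheorem9 (p n : nat) (hp : prime p) (hn : (2 <= n)%N) :
  let S := \sum_(1 <= j < p) zeta2 n (j%:R * 'X) ('X : {poly int}) in
  ((exists i : nat, (1 <= i)%N /\ n = (p ^ i)%N) ->
      polycongr p S (- zeta1 n ('X : {poly int}))) /\
  (~ (exists i : nat, (1 <= i)%N /\ n = (p ^ i)%N) ->
      polycongr p S 0).
Proof.
move=> S; rewrite /S sum_zeta2_mulr_diag; set c := half_weil_coef p n.
have p_gt0 := prime_gt0 hp.
have phi2_c : (phi2 n * c + p = p ^ n)%N by apply: phi2_mul_half_weil_coef; lia.
split => [[i [i_gt0 n_eq]] | not_pexp] j.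
  have c1_eq : (c.+1 = p ^ n.-1)%N.
    apply/eqP; rewrite -(eqn_pmul2l p_gt0) -expnS prednK 1?ltnW //.
    by rewrite -phi2_c n_eq phi2_pexp // mulnS addnC.
  rewrite /zeta1 opprK -mulrSr; apply: dvdz_coef_mulrn.
  by rewrite c1_eq dvdn_exp //; lia.
have p_coprime_phi2 : coprime p (phi2 n).
  by rewrite prime_coprime //; apply/negP => /(prime_dvd_phi2 _ hp _ hn)/not_pexp.
rewrite subr0; apply: dvdz_coef_mulrn.
rewrite -(Gauss_dvdr _ p_coprime_phi2) -(dvdn_addl _ (dvdnn p)) phi2_c.
by rewrite dvdn_exp //; lia.
Qed.
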